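(* In the setting described in the context, at the $k$-th iteration of Algorithm Solve(QVP), for each $v\in V^k$ let $w_v=v+t_v\hat d$ where $t_v$ is the optimal value of $(P^2(v))$. Then $$d_H(\mathcal{P}^k,\mathcal{Y}^{\diamond})\le\max_{v\in V^k}\|w_v-v\|.$$
   Context: Setting: $\mathcal{S}\subset\mathbb{R}^n$ nonempty convex compact; $f=(f_1,\dots,f_p):\mathbb{R}^n\to\mathbb{R}^p$ ($p\ge2$), each $f_i$ strictly quasiconvex on $\mathcal{S}$ (continuous and $h(x^1)<h(x^2)\Rightarrow h(\lambda x^1+(1-\lambda)x^2)<h(x^2)$ for $0<\lambda<1$). Vector inequalities are componentwise, $[a,b]=\{z:a\le z\le b\}$, $e^i$ is the $i$-th unit vector, $e=(1,\dots,1)$. $\mathcal{Y}=f(\mathcal{S})$, $\mathcal{Y}^+=\mathcal{Y}+\mathbb{R}^p_+$. $m_i=\min_{x\in\mathcal{S}}f_i(x)$ (assume $m\notin\mathcal{Y}$); $M\in\mathbb{R}^p$ satisfies $M_i\ge\max_{x\in\mathcal{S}}f_i(x)$ (constructed as the max of $f_i$ over the vertices of a simplex containing $\mathcal{S}$). $\mathcal{Y}^{\diamond}=\mathcal{Y}^+\cap(M-\mathbb{R}^p_+)$. Fix $\hat d>0$; $(P^2(v))$ is $\min_{x\in\mathcal{S}}\max_j (f_j(x)-v_j)/\hat d_j$. For finite $V\subset[m,M]$, the copolyblock with vertex set $V$ is $\bigcup_{v\in V}[v,M]$; a vertex is proper if no other vertex $v'\ne v$ satisfies $v'\le v$. Algorithm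 Solve(QVP) with tolerance $\epsilon\ge0$: set $V^0=\{m\}$, $V_\varepsilon=\emptyset$, $\mathcal{Y}_{WN}=\emptyset$, $k=0$. While $V^k\setminus V_\varepsilon\ne\emptyset$: choose $v^k\in V^k\setminus V_\varepsilon$, solve $(P^2(v^k))$ obtaining optimal $(x^k,t_k)$, set $w^k=v^k+t_k\hat d$, add $f(x^k)$ to $\mathcal{Y}_{WN}$; if $\|w^k-v^k\|\le\epsilon$, add $v^k$ to $V_\varepsilon$ and repeat the loop (without changing $k$); otherwise set $V^{k+1}=(V^k\setminus\{v^k\})\cup\{v^k+(w^k_i-v^k_i)e^i: i=1,\dots,p\}$, remove its improper elements, and increase $k$ by one. $\mathcal{P}^k=\bigcup_{v\in V^k}[v,M]$ ($\mathcal{P}^0=[m,M]$). $d_H(Q_1,Q_2)=\max\{\sup_{a\in Q_1}d(a,Q_2),\sup_{b\in Q_2}d(b,Q_1)\}$ is the Hausdorff distance, $d(a,Q)=\inf_{y\in Q}\|a-y\|$. *)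

From HB Require Import structures.
From mathcomp Require Import all_boot all_order all_algebra.
From mathcomp Require Import all_classical all_reals all_analysis.
Set Implicit Arguments. Unset Strict Implicit. Unset Printing Implicit Defensive.
Import Order.TTheory GRing.Theory Num.Theory.
Import numFieldNormedType.Exports.
Local Open Scope classical_set_scope.
Local Open Scope ring_scope.

Section Defs.
Variable R : realType.

(* Objective-space vectors: 'I_p -> R.  Decision-space vectors: 'rV[R]_n. *)

Definition vle (p : nat) (a b : 'I_p -> R) : Prop := forall i, a i <= b i.

Definition enorm (p : nat) (a : 'I_p -> R) : R := Num.sqrt (\sum_(i < p) a i ^+ 2).

Definition vsub (p : nat) (a b : 'I_p -> R) : 'I_p -> R := fun i => a i - b i.

Definition dist_set (p : nat) (a : 'I_p -> R) (Q : set ('I_p -> R)) : R :=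
  inf [set enorm (vsub a y) | y in Q].

Definition dHaus (p : nat) (Q1 Q2 : set ('I_p -> R)) : R :=
  Num.max (sup [set dist_set a Q2 | a in Q1]) (sup [set dist_set b Q1 | b in Q2]).

Definition maxcomp (p : nat) (g : 'I_p -> R) : R := sup (range g).

Definition cvx_set (n : nat) (S : set 'rV[R]_n) : Prop :=
  forall x y l, S x -> S y -> 0 <= l -> l <= 1 -> S (l *: x + (1 - l) *: y).

Definition strictly_quasiconvex_on (n : nat) (S : set 'rV[R]_n) (h : 'rV[R]_n -> R) : Prop :=
  {within S, continuous h} /\
  forall x1 x2 l, S x1 -> S x2 -> h x1 < h x2 -> 0 < l -> l < 1 ->
    h (l *: x1 + (1 - l) *: x2) < h x2.

Definition P2val (n p : nat) (S : set 'rV[R]_n) (f : 'rV[R]_n -> 'I_p -> R)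
  (dhat v : 'I_p -> R) : R :=
  inf [set maxcomp (fun j => (f x j - v j) / dhat j) | x in S].

Definition wpt (n p : nat) (S : set 'rV[R]_n) (f : 'rV[R]_n -> 'I_p -> R)
  (dhat v : 'I_p -> R) : 'I_p -> R :=
  fun i => v i + P2val S f dhat v * dhat i.

Definition new_vertices (p : nat) (v w : 'I_p -> R) : set ('I_p -> R) :=
  [set (fun l => v l + (w i - v i) * (if l == i then 1 else 0)) | i in [set: 'I_p]].

Definition proper_part (p : nat) (C : set ('I_p -> R)) : set ('I_p -> R) :=
  [set u | C u /\ ~ (exists u', C u' /\ u' <> u /\ vle u' u)].

(** one (non-epsilon) update step of Solve(QVP) at the chosen vertex v *)
Definition update_step (p : nat) (V : set ('I_p -> R)) (v w : 'I_p -> R) : set ('I_p -> R) :=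
  proper_part ((V `\` [set v]) `|` new_vertices v w).

Definition copolyblock (p : nat) (V : set ('I_p -> R)) (M : 'I_p -> R) : set ('I_p -> R) :=
  [set y | exists2 v, V v & vle v y /\ vle y M].

Definition Ydiamond (n p : nat) (S : set 'rV[R]_n) (f : 'rV[R]_n -> 'I_p -> R)
  (M : 'I_p -> R) : set ('I_p -> R) :=
  [set y | (exists2 x, S x & vle (f x) y) /\ vle y M].

End Defs.

From HB Require Import structures.
From mathcomp Require Import all_boot all_order all_algebra.
From mathcomp Require Import all_classical all_reals all_analysis.
From mathcomp Require Import lra.
Import Order.TTheory GRing.Theory Num.Theory.
Import numFieldNormedType.Exports.
Local Open Scope classical_set_scope.
Local Open Scope ring_scope.

(** Let [t_v] be the optimal value of (P^2(v)), so that [w_v - v = t_v dhat].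
    Every point [a] of the copolyblock lies above some vertex [v]; if [x] is
    nearly optimal for (P^2(v)), then [max(a, f x)] lies in Y^diamond and
    differs from [a] componentwise by at most about [|t_v| dhat], so
    [d(a, Y^diamond) <= |t_v| |dhat| = |w_v - v|].  Conversely, the algorithm
    keeps Y^+ inside the upper set of its vertices: a point [y >= f x] above
    the removed vertex [v] lies above the new vertex [v + t_v dhat_j e^j],
    [j] being an index where the objective of (P^2(v)) at [x] is maximal, and
    pruning improper vertices of a finite set loses no dominated point.  Hence
    Y^diamond is contained in the copolyblock and the other half of the
    Hausdorff distance vanishes. *)

Lemma finite_set_argmin {T : eqType} {R : realDomainType} (A : set T) (phi : T -> R) :
  finite_set A -> A !=set0 -> exists2 a, A a & forall b, A b -> phi a <= phi b.
Proof.
move=> /finite_seqP[s ->] [x0 sx0].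
have s_gt0 : (0 < size s)%N by case: s sx0.
case: (@arg_minP _ R _ (Ordinal s_gt0) xpredT (fun i => phi (nth x0 s i))) => // i _ imin.
exists (nth x0 s i); first exact: mem_nth.
by move=> b /(nthP x0)[j js <-]; exact: (imin (Ordinal js)).
Qed.

Lemma finite_image_has_ubound {T : eqType} {R : realDomainType} (A : set T) (phi : T -> R) :
  finite_set A -> has_ubound (phi @` A).
Proof.
move=> finA; have [->|/set0P A0] := eqVneq A set0; first by exists 0 => ? [].
have [a _ amax] := finite_set_argmin _ (fun b => - phi b) finA A0.
by exists (phi a) => _ [b Ab <-]; rewrite -lerN2; exact: amax.
Qed.

Lemma ge_sup_ge0 {R : realType} (A : set R) (c : R) :
  0 <= c -> ubound A c -> sup A <= c.
Proof.
move=> c_ge0 Ac; have [->|/set0P A0] := eqVneq A set0; first by rewrite sup0.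
exact: ge_sup.
Qed.

Section Vectors.
Context {R : realType} {p : nat}.
Implicit Types (a b u d g : 'I_p -> R).

Lemma enorm_ge0 a : 0 <= enorm a.
Proof. exact: sqrtr_ge0. Qed.

Lemma enorm_vsubrr a : enorm (vsub a a) = 0.
Proof.
rewrite /enorm /vsub; under eq_bigr do rewrite subrr expr0n /=.
by rewrite big1 // sqrtr0.
Qed.

Lemma enormZ (c : R) d : enorm (fun i => c * d i) = `|c| * enorm d.
Proof.
rewrite /enorm; under eq_bigr do rewrite exprMn.
by rewrite -mulr_sumr sqrtrM ?sqr_ge0 // sqrtr_sqr.
Qed.

Lemma ler_enorm a b : (forall i, `|a i| <= b i) -> enorm a <= enorm b.
Proof.
move=> ab; rewrite /enorm ler_sqrt; last by apply: sumr_ge0 => i _; exact: sqr_ge0.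
apply: ler_sum => i _; have := ab i; rewrite ler_norml => /andP[? ?]; nra.
Qed.

Lemma ltr_sum_vle u a : vle u a -> u <> a -> \sum_i u i < \sum_i a i.
Proof.
move=> ua ua_neq; have [i /eqP ui_neq] : exists i, u i <> a i.
  by apply/existsNP => ua_eq; apply/ua_neq/funext.
rewrite (bigD1 i) //= [X in _ < X](bigD1 i) //=.
by apply: ltr_leD; [rewrite lt_neqAle ui_neq ua | apply: ler_sum => j _; exact: ua].
Qed.

Lemma maxcomp_ge g i : g i <= maxcomp g.
Proof.
apply: (ub_le_sup (E := range g)); last by exists i.
by apply: finite_image_has_ubound; exact: finite_finset.
Qed.

Lemma maxcompP g (i0 : 'I_p) : exists2 j, maxcomp g = g j & forall i, g i <= g j.
Proof.
case: (@arg_maxP _ R _ i0 xpredT g) => // j _ jmax.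
exists j => [|i]; last exact: jmax.
apply: le_anti; rewrite maxcomp_ge andbT.
by apply: ge_sup; [exists (g i0), i0 | move=> _ [i _ <-]; exact: jmax].
Qed.

Lemma dist_set_le a {Q : set ('I_p -> R)} {b} : Q b -> dist_set a Q <= enorm (vsub a b).
Proof.
move=> Qb; apply: ge_inf; last by exists b.
by exists 0 => _ [y _ <-]; exact: enorm_ge0.
Qed.

Lemma dHaus_le (Q1 Q2 : set ('I_p -> R)) (c : R) : 0 <= c ->
  (forall a, Q1 a -> dist_set a Q2 <= c) -> (forall b, Q2 b -> dist_set b Q1 <= c) ->
  dHaus Q1 Q2 <= c.
Proof.
move=> c_ge0 d12 d21; rewrite /dHaus ge_max.
by apply/andP; split; apply: ge_sup_ge0 => // _ [a Qa <-]; [exact: d12 | exact: d21].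
Qed.

Definition upset (V : set ('I_p -> R)) : set ('I_p -> R) :=
  [set y | exists2 u, V u & vle u y].

Lemma proper_part_le {C : set ('I_p -> R)} {u} :
  finite_set C -> C u -> exists2 a, proper_part C a & vle a u.
Proof.
move=> finC Cu; pose B := C `&` [set b | vle b u].
have [a [Ca au] amin] := finite_set_argmin _ (fun b => \sum_i b i) (finite_setIl _ finC)
  (ex_intro B u (conj Cu (fun i => lexx (u i)))).
exists a => //; split => // -[b [Cb [ba ab]]].
have := amin b (conj Cb (fun i => le_trans (ab i) (au i))).
by rewrite leNgt ltr_sum_vle.
Qed.

Lemma finite_update_candidates {V : set ('I_p -> R)} v w :
  finite_set V -> finite_set ((V `\` [set v]) `|` new_vertices v w).
Proof.
move=> finV; rewrite finite_setU; split; first exact: finite_setD.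
by apply: finite_image; exact: finite_finset.
Qed.

Lemma finite_update_step {V : set ('I_p -> R)} v w :
  finite_set V -> finite_set (update_step V v w).
Proof.
move=> finV; have finC := finite_update_candidates v w finV.
by apply: sub_finite_set finC => u [].
Qed.

End Vectors.

Definition Yplus {R : realType} {n p : nat} (S : set 'rV[R]_n) (f : 'rV[R]_n -> 'I_p -> R) :
  set ('I_p -> R) := [set y | exists2 x, S x & vle (f x) y].

Definition P2obj {R : realType} {n p : nat} (f : 'rV[R]_n -> 'I_p -> R) (dhat v : 'I_p -> R)
  (x : 'rV[R]_n) : R := maxcomp (fun j => (f x j - v j) / dhat j).

Section SolveQVP.
Context {R : realType} {n p : nat} {S : set 'rV[R]_n} {f : 'rV[R]_n -> 'I_p -> R}.
Context {m dhat : 'I_p -> R}.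
Hypothesis p_gt0 : (0 < p)%N.
Hypothesis m_le : forall i x, S x -> m i <= f x i.
Hypothesis dhat_gt0 : forall i, 0 < dhat i.

Let i0 : 'I_p := Ordinal p_gt0.

Lemma P2obj_lbound v : has_lbound (P2obj f dhat v @` S).
Proof.
exists ((m i0 - v i0) / dhat i0) => _ [x Sx <-].
apply: le_trans (maxcomp_ge _ i0).
by rewrite ler_pM2r ?invr_gt0 // lerB // m_le.
Qed.

Lemma P2obj_has_inf v : S !=set0 -> has_inf (P2obj f dhat v @` S).
Proof. by move=> [x Sx]; split; [exists (P2obj f dhat v x), x | exact: P2obj_lbound]. Qed.

Lemma P2val_le v {x} : S x -> P2val S f dhat v <= P2obj f dhat v x.
Proof. by move=> Sx; apply: ge_inf; [exact: P2obj_lbound | exists x]. Qed.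

Lemma enorm_wpt_sub v :
  enorm (vsub (wpt S f dhat v) v) = `|P2val S f dhat v| * enorm dhat.
Proof.
rewrite -enormZ; congr enorm; apply: funext => i.
by rewrite /vsub /wpt addrC addKr.
Qed.

Lemma new_vertices_le {v x y} : S x -> vle (f x) y -> vle v y ->
  exists2 u, new_vertices v (wpt S f dhat v) u & vle u y.
Proof.
move=> Sx fxy vy.
have [j objE _] := maxcompP (fun j => (f x j - v j) / dhat j) i0.
have t_le : P2val S f dhat v * dhat j <= y j - v j.
  rewrite -ler_pdivlMr //; apply: le_trans (P2val_le v Sx) _.
  by rewrite /P2obj objE ler_pM2r ?invr_gt0 // lerB.
exists (fun l => v l + (wpt S f dhat v j - v j) * (if l == j then 1 else 0)).
  by exists j.
move=> l; case: eqP => [->|_]; last by rewrite mulr0 addr0.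
by rewrite mulr1 /wpt; lra.
Qed.

Lemma upset_update_step (V : set ('I_p -> R)) v : finite_set V ->
  Yplus S f `<=` upset V -> Yplus S f `<=` upset (update_step V v (wpt S f dhat v)).
Proof.
move=> finV YV y Yy; have [x Sx fxy] := Yy; have [u Vu uy] := YV y Yy.
pose C := (V `\` [set v]) `|` new_vertices v (wpt S f dhat v).
have [u1 Cu1 u1y] : exists2 u1, C u1 & vle u1 y.
  have [uv|uv] := pselect (u = v); last by exists u => //; left.
  rewrite uv in uy; have [u1 ? ?] := new_vertices_le Sx fxy uy.
  by exists u1 => //; right.
have [a Pa au1] := proper_part_le (finite_update_candidates v _ finV) Cu1.
by exists a => // i; exact: le_trans (au1 i) (u1y i).
Qed.

Lemma Solve_invariant {V : nat -> set ('I_p -> R)} {k : nat} : V 0%N = [set m] ->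
  (forall j, (j < k)%N -> exists v, V j.+1 = update_step (V j) v (wpt S f dhat v)) ->
  forall j, (j <= k)%N -> finite_set (V j) /\ Yplus S f `<=` upset (V j).
Proof.
move=> V0 step; elim=> [|j IH] jk.
  rewrite V0; split; first exact: finite_set1.
  by move=> y [x Sx fxy]; exists m => // i; exact: le_trans (m_le i _ Sx) (fxy i).
have [v ->] := step j jk; have [finV YV] := IH (ltnW jk).
by split; [exact: finite_update_step | exact: upset_update_step].
Qed.

Context {M : 'I_p -> R}.
Hypothesis f_le_M : forall i x, S x -> f x i <= M i.

Lemma dist_Ydiamond_le {a v x} (c : R) : vle v a -> vle a M -> S x -> 0 <= c ->
  (forall i, f x i - v i <= c * dhat i) -> dist_set a (Ydiamond S f M) <= c * enorm dhat.
Proof.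
move=> va aM Sx c_ge0 fx_le.
pose y i := Num.max (a i) (f x i).
have Yy : Ydiamond S f M y.
  split; first by exists x => // i; rewrite le_max lexx orbT.
  by move=> i; rewrite ge_max aM f_le_M.
apply: le_trans (dist_set_le a Yy) _.
rewrite -[c]ger0_norm // -enormZ; apply: ler_enorm => i; rewrite /vsub /y.
have cd_ge0 : 0 <= c * dhat i by rewrite mulr_ge0 // ltW.
have [afx|fxa] := leP (a i) (f x i); last by rewrite subrr normr0.
rewrite distrC ger0_norm ?subr_ge0 //.
by apply: le_trans (fx_le i); rewrite lerB.
Qed.

Lemma dist_copolyblock_Ydiamond {a v} : S !=set0 -> vle v a -> vle a M ->
  dist_set a (Ydiamond S f M) <= enorm (vsub (wpt S f dhat v) v).
Proof.
move=> S0 va aM; rewrite enorm_wpt_sub.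
set t := P2val S f dhat v; set N := enorm dhat.
have N1_gt0 : 0 < N + 1 by rewrite ltr_wpDl // enorm_ge0.
apply/ler_addgt0Pr => e e_gt0; set delta := e / (N + 1).
have delta_gt0 : 0 < delta by rewrite divr_gt0.
have [_ [x Sx <-] objx] := inf_adherent delta_gt0 (P2obj_has_inf v S0).
apply: le_trans (dist_Ydiamond_le (`|t| + delta) va aM Sx _ _) _.
- by rewrite addr_ge0 // ltW.
- move=> i; rewrite -ler_pdivrMr //.
  apply: le_trans (maxcomp_ge (fun j => (f x j - v j) / dhat j) i) _.
  by apply/ltW/(lt_le_trans objx); rewrite lerD2r ler_norm.
- by rewrite mulrDl lerD2l /delta mulrAC ler_pdivrMr // ler_pM2l // lerDl.
Qed.

End SolveQVP.

Theorem mainTheorem5 (R : realType) (n p : nat) (S : set 'rV[R]_n)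
  (f : 'rV[R]_n -> 'I_p -> R) (m M dhat : 'I_p -> R) (eps : R)
  (V : nat -> set ('I_p -> R)) (k : nat) :
  (2 <= p)%N ->
  S !=set0 -> cvx_set S -> compact S ->
  (forall i, strictly_quasiconvex_on S (fun x => f x i)) ->
  (* m_i = min_{x in S} f_i(x) *)
  (forall i, (exists2 x, S x & f x i = m i) /\ (forall x, S x -> m i <= f x i)) ->
  ~ (exists2 x, S x & f x = m) ->
  (forall i x, S x -> f x i <= M i) ->
  (forall i, 0 < dhat i) ->
  0 <= eps ->
  (* the run of Solve(QVP) up to iteration k *)
  V 0%N = [set m] ->
  (forall j, (j < k)%N ->
     exists v, [/\ V j v,
       eps < enorm (vsub (wpt S f dhat v) v) &
       V j.+1 = update_step (V j) v (wpt S f dhat v)]) ->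
  dHaus (copolyblock (V k) M) (Ydiamond S f M)
    <= sup [set enorm (vsub (wpt S f dhat v) v) | v in V k].
Proof.
move=> p_ge2 S0 _ _ _ m_min _ f_le_M dhat_gt0 _ V0 run.
have p_gt0 : (0 < p)%N by apply: leq_trans p_ge2.
have m_le i x : S x -> m i <= f x i by apply: (m_min i).2.
have [finVk YVk] : finite_set (V k) /\ Yplus S f `<=` upset (V k).
  apply: (Solve_invariant p_gt0 m_le dhat_gt0 V0 _ k (leqnn k)) => j /run[v [_ _ ->]].
  by exists v.
set E := [set enorm _ | v in V k].
have le_supE v : V k v -> enorm (vsub (wpt S f dhat v) v) <= sup E.
  by move=> Vv; apply: ub_le_sup; [exact: finite_image_has_ubound | exists v].
have supE_ge0 : 0 <= sup E.
  have [x0 Sx0] := S0; have [u Vu _] := YVk (f x0) (ex_intro2 _ _ x0 Sx0 (fun i => lexx _)).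
  exact: le_trans (enorm_ge0 _) (le_supE u Vu).
apply: dHaus_le => // [a [v Vv [va aM]] | b [Yb bM]].
  apply: le_trans (le_supE v Vv).
  exact: (dist_copolyblock_Ydiamond p_gt0 m_le dhat_gt0 f_le_M S0 va aM).
have Pb : copolyblock (V k) M b by have [u Vu ub] := YVk b Yb; exists u.
by apply: le_trans (dist_set_le b Pb) _; rewrite enorm_vsubrr.
Qed.
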